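(* Let $\mathcal{I}$ be finite and, for $\mathbf{Q}\in B(\mathcal{L})$, let $p^{MU}(\mathbf{Q})=\log|\mathcal{P}_{\mathbf{Q}}|$ (the min-entropy information gain under the uniform distribution on $\mathcal{I}$). Then $p^{MU}$ is an arbitrage-free instance-independent pricing function.
   Context: $\mathcal{I}$ is a set of database instances; queries are deterministic functions on $\mathcal{I}$; a query bundle is a finite tuple of queries from a language $\mathcal{L}$, evaluated componentwise; $B(\mathcal{L})$ is the set of bundles, closed under concatenation $\mathbf{Q}_1,\mathbf{Q}_2$. $\mathcal{P}_{\mathbf{Q}}$ is the partition of $\mathcal{I}$ into the equivalence classes of $D\sim D'\iff\mathbf{Q}(D)=\mathbf{Q}(D')$, and $|\mathcal{P}_{\mathbf{Q}}|$ is its number of blocks. An instance-independent pricing function $p$ is arbitrage-free if (i) whenever for all $D',D''\in\mathcal{I}$, $\mathbf{Q}_2(D')=\mathbf{Q}_2(D'')$ implies $\mathbf{Q}_1(D')=\mathbf{Q}_1(D'')$, we have $p(\mathbf{Q}_2)\ge p(\mathbf{Q}_1)$; and (ii) $p(\mathbf{Q}_1,\mathbf{Q}_2)\le p(\mathbf{Q}_1)+p(\mathbf{Q}_2)$ for all bundles. *)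

From HB Require Import structures.
From mathcomp Require Import all_boot all_order all_algebra.
From mathcomp Require Import boolp reals exp.
Set Implicit Arguments. Unset Strict Implicit. Unset Printing Implicit Defensive.
Import Order.TTheory GRing.Theory Num.Theory.

(* Instances: a finite type [I].  Queries: functions [I -> Out].
   A query language [L] is a predicate on queries; a bundle is a finite
   tuple (list) of queries from [L], evaluated componentwise. *)

Definition eval_bundle (I : Type) (Out : Type) (Q : seq (I -> Out)) (D : I)
  : seq Out := map (fun q => q D) Q.

Fixpoint is_bundle (I Out : Type) (L : (I -> Out) -> Prop) (Q : seq (I -> Out))
  : Prop := if Q is q :: Q' then L q /\ is_bundle L Q' else True.

Definition partition_of (I : finType) (Out : Type) (Q : seq (I -> Out))
  : {set {set I}} :=
  [set [set D' | `[< eval_bundle Q D' = eval_bundle Q D >]] | D : I].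

Definition nblocks (I : finType) (Out : Type) (Q : seq (I -> Out)) : nat :=
  #|partition_of Q|.

Definition pMU (R : realType) (I : finType) (Out : Type) (Q : seq (I -> Out)) : R :=
  ln ((nblocks Q)%:R).

Definition arbitrage_free (R : realType) (I Out : Type)
  (L : (I -> Out) -> Prop) (p : seq (I -> Out) -> R) : Prop :=
  (forall Q1 Q2, is_bundle L Q1 -> is_bundle L Q2 ->
     (forall D' D'', eval_bundle Q2 D' = eval_bundle Q2 D'' ->
                     eval_bundle Q1 D' = eval_bundle Q1 D'') ->
     (p Q1 <= p Q2)%R) /\
  (forall Q1 Q2, is_bundle L Q1 -> is_bundle L Q2 ->
     (p (Q1 ++ Q2) <= p Q1 + p Q2)%R).

(** The blocks of [P_Q] are the fibres of [D |-> Q(D)].  If [Q2] determines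
    [Q1], every fibre of [Q2] lies in a fibre of [Q1], so [P_Q1] has at most as
    many blocks as [P_Q2]; the fibres of [Q1, Q2] are the nonempty
    intersections of a fibre of [Q1] with one of [Q2], so
    [|P_(Q1,Q2)| <= |P_Q1| |P_Q2|].  Taking logarithms gives both conditions;
    when [I] is empty every count is [0] and [ln 0 = 0] keeps the bounds true. *)
From mathcomp Require Import all_boot all_order all_algebra.
From mathcomp Require Import boolp reals exp.
Import Order.TTheory GRing.Theory Num.Theory.
Set Implicit Arguments. Unset Strict Implicit.

Lemma leq_imset_card_factor (I A B : finType) (f : I -> A) (g : I -> B)
    (D : {pred I}) :
  (forall x y, g x = g y -> f x = f y) -> #|f @: D| <= #|g @: D|.
Proof.
move=> gf; pose h b := omap f [pick x in D | g x == b].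
have hg x : x \in D -> h (g x) = Some (f x).
  move=> Dx; rewrite /h; case: pickP => [y /andP[_ /eqP/gf] /= -> //|].
  by move/(_ x); rewrite Dx eqxx.
have -> : #|f @: D| = #|(Some \o f) @: D|.
  by rewrite (imset_comp Some f) (card_imset _ Some_inj).
suff -> : (Some \o f) @: D = h @: (g @: D) by apply: leq_imset_card.
apply/setP => a; apply/imsetP/imsetP => [[x Dx ->]|[_ /imsetP[x Dx ->] ->]].
- by exists (g x); rewrite ?imset_f ?hg.
- by exists x; rewrite ?hg.
Qed.

Lemma card_imset_pair_le (I A B : finType) (f : I -> A) (g : I -> B)
    (D : {pred I}) :
  #|[set (f x, g x) | x in D]| <= #|f @: D| * #|g @: D|.
Proof.
rewrite -cardsX; apply/subset_leq_card/subsetP => _ /imsetP[x Dx ->].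
by rewrite in_setX !imset_f.
Qed.

Section Blocks.
Variables (I : finType) (Out : Type).
Implicit Types (Q : seq (I -> Out)) (D : I).

Definition bundle_block Q D : {set I} :=
  [set D' | `[< eval_bundle Q D' = eval_bundle Q D >]].

Lemma eq_bundle_block Q D D' :
  bundle_block Q D = bundle_block Q D' <-> eval_bundle Q D = eval_bundle Q D'.
Proof.
split=> [eqQ|eqQ]; last by apply/setP => x; rewrite !inE eqQ.
have : D \in bundle_block Q D' by rewrite -eqQ inE; apply/asboolP.
by rewrite inE => /asboolP.
Qed.

Lemma nblocksE Q : nblocks Q = #|[set bundle_block Q D | D : I]|.
Proof. by []. Qed.

Lemma nblocks_le_determined Q1 Q2 :
  (forall D D', eval_bundle Q2 D = eval_bundle Q2 D' ->
                eval_bundle Q1 D = eval_bundle Q1 D') ->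
  nblocks Q1 <= nblocks Q2.
Proof.
move=> Q21; rewrite !nblocksE; apply: leq_imset_card_factor => D D'.
by move/eq_bundle_block/Q21/eq_bundle_block.
Qed.

Lemma nblocks_cat Q1 Q2 : nblocks (Q1 ++ Q2) <= nblocks Q1 * nblocks Q2.
Proof.
rewrite !nblocksE; apply: leq_trans (card_imset_pair_le _ _ _).
apply: leq_imset_card_factor => D D' [/eq_bundle_block eq1 /eq_bundle_block eq2].
by apply/eq_bundle_block; rewrite /eval_bundle !map_cat -!/(eval_bundle _ _) eq1 eq2.
Qed.

End Blocks.

Section LnNat.
Variable R : realType.
Local Open Scope ring_scope.

Lemma ln_nat_ge0 (n : nat) : 0 <= ln (n%:R : R).
Proof. by case: n => [|n]; [rewrite ln0 | apply: ln_ge0; rewrite ler1n]. Qed.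

Lemma ler_ln_nat (m n : nat) : (m <= n)%N -> ln (m%:R : R) <= ln n%:R.
Proof.
case: m => [_|m le_mn]; first by rewrite ln0 // ln_nat_ge0.
have n_gt0 : (0 < n)%N by apply: leq_trans le_mn.
by rewrite ler_ln ?posrE ?ltr0n ?ler_nat.
Qed.

Lemma ln_natM_le (m n : nat) : ln ((m * n)%:R : R) <= ln m%:R + ln n%:R.
Proof.
case: m => [|m]; first by rewrite mul0n ln0 // add0r ln_nat_ge0.
case: n => [|n]; first by rewrite muln0 ln0 // addr0 ln_nat_ge0.
by rewrite natrM lnM ?posrE ?ltr0n.
Qed.

End LnNat.

Theorem lemma21 (R : realType) (I : finType) (Out : Type)
  (L : (I -> Out) -> Prop) :
  arbitrage_free L (@pMU R I Out).
Proof.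
split=> Q1 Q2 _ _ => [Q21|]; rewrite /pMU.
- exact/ler_ln_nat/nblocks_le_determined.
- exact/(le_trans _ (ln_natM_le _ _ _))/ler_ln_nat/nblocks_cat.
Qed.
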